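(* (i) For every $K>0$ and every stable phase-locked steady state $\theta^*$ of the Kuramoto network with coupling strength $K$, one has $r_{\rm uni}(\theta^* )>0$. (ii) If $K\mapsto\theta^*(K)$, $K\in I$ ($I\subset(0,\infty)$ an open interval), is a continuously differentiable family of stable phase-locked steady states, then $K\mapsto r_{\rm uni}(\theta^*(K))$ is monotonically non-decreasing on $I$, and if $\omega\neq 0$ it is strictly increasing, with $\frac{d r_{\rm uni}(\theta^*(K))}{dK}>0$ for all $K\in I$.
   Context: Kuramoto network: $N\ge 2$ oscillators with phases $\theta_i(t)$ obeying $\frac{d\theta_i}{dt}=\omega_i+K\sum_{j=1}^N A_{i,j}\sin(\theta_j-\theta_i)$, where $\omega=(\omega_1,\dots,\omega_N)^T\in\mathbb{R}^N$ are natural frequencies with $\sum_{i=1}^N\omega_i=0$, $K>0$ is the coupling strength, and $A=(A_{i,j})$ is the symmetric adjacency matrix ($A_{i,j}=A_{j,i}\in\{0,1\}$, $A_{i,i}=0$) of a connected undirected graph; $k_i=\sum_j A_{i,j}$ is the degree of node $i$. A phase-locked steady state is a vector $\theta^*\in\mathbb{R}^N$ with $\omega_i+K\sum_j A_{i,j}\sin(\theta_j^*-\theta_i^* )=0$ for all $i$. Its Jacobian $J$ is the symmetric matrix with $J_{i,j}=KA_{i,j}\cos(\theta_i^*-\theta_j^* )$ for $i\neq j$ and $J_{i,i}=-K\sum_j A_{i,j}\cos(\theta_i^*-\theta_j^* )$; it always has eigenvalue $\lambda_1=0$ with eigenvector $(1,\dots,1)^T$. The state is called stable if all remaining eigenvalues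 $\lambda_2,\dots,\lambda_N$ of $J$ are strictly negative. The order parameter is $r_{\rm uni}=\frac{1}{\sum_i k_i}\sum_{i,j}A_{i,j}\langle\cos(\theta_i-\theta_j)\rangle_t$, which for a steady state equals $r_{\rm uni}(\theta^* )=\frac{1}{\sum_i k_i}\sum_{i,j}A_{i,j}\cos(\theta_i^*-\theta_j^* )$. *)

From Stdlib Require Import Reals Lra Lia List.
Open Scope R_scope.

(* Vectors in R^N are functions nat -> R, meaningful on indices 0..N-1;
   matrices are functions nat -> nat -> R. *)

Fixpoint sumN (N : nat) (f : nat -> R) : R :=
  match N with
  | O => 0
  | S n => sumN n f + f n
  end.

Definition adjacency (N : nat) (A : nat -> nat -> R) : Prop :=
  (forall i j, (i < N)%nat -> (j < N)%nat -> A i j = 0 \/ A i j = 1) /\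
  (forall i j, (i < N)%nat -> (j < N)%nat -> A i j = A j i) /\
  (forall i, (i < N)%nat -> A i i = 0).

Inductive reach (N : nat) (A : nat -> nat -> R) : nat -> nat -> Prop :=
  | reach_refl : forall i, reach N A i i
  | reach_step : forall i k j, (k < N)%nat -> A i k = 1 -> reach N A k j ->
                 reach N A i j.

Definition connected (N : nat) (A : nat -> nat -> R) : Prop :=
  forall i j, (i < N)%nat -> (j < N)%nat -> reach N A i j.

Definition degree (N : nat) (A : nat -> nat -> R) (i : nat) : R :=
  sumN N (fun j => A i j).

Definition steady_state (N : nat) (A : nat -> nat -> R) (omega : nat -> R)
  (K : R) (theta : nat -> R) : Prop :=
  forall i, (i < N)%nat ->
    omega i + K * sumN N (fun j => A i j * sin (theta j - theta i)) = 0.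

Definition jacobian (N : nat) (A : nat -> nat -> R) (K : R) (theta : nat -> R)
  (i j : nat) : R :=
  if Nat.eq_dec i j
  then - K * sumN N (fun l => A i l * cos (theta i - theta l))
  else K * A i j * cos (theta i - theta j).

Definition mat_vec (N : nat) (M : nat -> nat -> R) (v : nat -> R) (i : nat) : R :=
  sumN N (fun j => M i j * v j).

Definition eigenpair (N : nat) (M : nat -> nat -> R) (lambda : R) (v : nat -> R) : Prop :=
  (exists i, (i < N)%nat /\ v i <> 0) /\
  (forall i, (i < N)%nat -> mat_vec N M v i = lambda * v i).

Definition constant_vec (N : nat) (v : nat -> R) : Prop :=
  exists c, forall i, (i < N)%nat -> v i = c.

(* Stability: apart from the eigenvalue lambda_1 = 0 with eigenvector (1,...,1)
   (counted once), all eigenvalues of the (real symmetric) Jacobian are < 0.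
   Equivalently: every eigenvalue admitting an eigenvector that is not a
   multiple of (1,...,1) is strictly negative (this also excludes 0 having
   multiplicity >= 2). *)
Definition stable (N : nat) (A : nat -> nat -> R) (K : R) (theta : nat -> R) : Prop :=
  forall lambda v, eigenpair N (jacobian N A K theta) lambda v ->
    ~ constant_vec N v -> lambda < 0.

Definition stable_steady_state (N : nat) (A : nat -> nat -> R) (omega : nat -> R)
  (K : R) (theta : nat -> R) : Prop :=
  steady_state N A omega K theta /\ stable N A K theta.

Definition r_uni (N : nat) (A : nat -> nat -> R) (theta : nat -> R) : R :=
  / sumN N (fun i => degree N A i) *
  sumN N (fun i => sumN N (fun j => A i j * cos (theta i - theta j))).

Definition in_interval (lo : R) (hi : option R) (K : R) : Prop :=
  lo < K /\ match hi with Some h => K < h | None => True end.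

From Stdlib Require Import Reals Lra Lia Classical.
Open Scope R_scope.

(* Stability makes the Jacobian J, a graph Laplacian with edge weights
   K A_ij cos(theta_i - theta_j), negative semidefinite, and negative definite off the
   constant vectors.  The spectral fact behind this: if x^T J x > 0 somewhere, a maximiser
   of x^T J x - a |x|^4 (a > 0 small) over a large compact box is an eigenvector of J with
   positive eigenvalue.
   (i) Each diagonal entry e_k^T J e_k is <= 0 and e_0^T J e_0 < 0, so
   trace J = - K sum_ij A_ij cos(theta_i - theta_j) < 0, i.e. r_uni > 0.
   (ii) Differentiating the steady-state equations in K gives J theta' = - c, where
   c_i = sum_j A_ij sin(theta_j - theta_i), and then
   d r_uni / dK = 2 theta'.c / sum_i k_i = - 2 theta'^T J theta' / sum_i k_i >= 0.
   A constant theta' would force c = 0, hence omega = - K c = 0. *)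

(* A function of the coordinates 0..n of a
   vector [nat -> R] is read on row vectors 'rV[R]_n.+1, where mathcomp-analysis provides
   compactness of boxes and the extreme value theorem. *)
Module BoxMax.
From mathcomp Require Import all_boot all_algebra.
From mathcomp Require Import all_classical all_reals all_analysis.
From mathcomp Require Import Rstruct Rstruct_topology.
Import numFieldNormedType.Exports.

Section Box.
Variable n : nat.

Definition of_row (v : 'rV[R]_n.+1) : nat -> R := fun i => v ord0 (inord i).

Definition row_continuous (h : (nat -> R) -> R) := continuous (fun v => h (of_row v)).

Lemma row_continuous_coord i : row_continuous (fun x => x i).
Proof. by move=> v; apply: coord_continuous. Qed.

Lemma row_continuous_cst c : row_continuous (fun _ => c).
Proof. by move=> v; apply: cst_continuous. Qed.

Lemma row_continuous_plus f g : row_continuous f -> row_continuous g ->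
  row_continuous (fun x => Rplus (f x) (g x)).
Proof. by move=> cf cg v; apply: (@continuousD R R^o _ _ _ v (cf v) (cg v)). Qed.

Lemma row_continuous_mult f g : row_continuous f -> row_continuous g ->
  row_continuous (fun x => Rmult (f x) (g x)).
Proof. by move=> cf cg v; apply: (continuousM (cf v) (cg v)). Qed.

Lemma row_continuous_minus f g : row_continuous f -> row_continuous g ->
  row_continuous (fun x => Rminus (f x) (g x)).
Proof. by move=> cf cg v; apply: (@continuousB R R^o _ _ _ v (cf v) (cg v)). Qed.

Lemma row_continuous_sumN m (f : nat -> (nat -> R) -> R) :
  (forall i, row_continuous (f i)) -> row_continuous (fun x => sumN m (fun i => f i x)).
Proof.
move=> cf; elim: m => [|m IH] /=; first exact: row_continuous_cst.
exact: row_continuous_plus.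
Qed.

Local Open Scope ring_scope.
Local Open Scope classical_set_scope.

Lemma exists_max_on_box (h : (nat -> R) -> R) (B : R) : row_continuous h -> Rle 0 B ->
  (forall x y, (forall i, (i <= n)%coq_nat -> x i = y i) -> h x = h y) ->
  exists c : nat -> R,
    forall x, (forall i, (i <= n)%coq_nat -> Rle (Rabs (x i)) B) -> Rle (h x) (h c).
Proof.
move=> ch B0 hloc.
have memI x : (`[(- B)%R, B]%classic : set R) x <-> (Rle (- B) x /\ Rle x B).
  rewrite /= in_itv /=; split; first by move=> /andP [/RleP h1 /RleP h2].
  by move=> [h1 h2]; apply/andP; split; apply/RleP.
pose A := [set v : 'rV[R]_n.+1 | forall i, (`[(- B)%R, B]%classic : set R) (v ord0 i)].
have cA : compact A.
  by apply: (@rV_compact _ _ (fun=> `[(- B)%R, B]%classic)) => _; apply: segment_compact.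
have A0 : A !=set0.
  exists 0%R => i; apply/memI; rewrite mxE; change (GRing.zero : R) with R0; split; lra.
have [c _ cmax] := EVT_max_rV A0 cA (continuous_subspaceT ch).
have inA x : (forall i, (i <= n)%coq_nat -> Rle (Rabs (x i)) B) ->
   (\row_(j < n.+1) x j) \in A.
  move=> hx; rewrite inE => i; apply/memI; rewrite mxE.
  have := hx i (proj1 (Nat.lt_succ_r _ _) (ltP (ltn_ord i))) => hxi.
  have h1 := Rle_abs (x i); have h2 := Rle_abs (- x i); rewrite Rabs_Ropp in h2.
  split; lra.
exists (of_row c) => x hx.
have -> : h x = h (of_row (\row_(j < n.+1) x j)).
  apply: hloc => i hi; rewrite /of_row mxE inordK //; exact/ltP/Nat.lt_succ_r.
apply/RleP; exact: cmax (inA x hx).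
Qed.

End Box.
End BoxMax.

Lemma sumN_ext N f g : (forall i, (i < N)%nat -> f i = g i) -> sumN N f = sumN N g.
Proof.
  induction N; intros H; simpl; auto.
  rewrite IHN by (intros; apply H; lia). rewrite H by lia. reflexivity.
Qed.

Lemma sumN_plus N f g : sumN N (fun i => f i + g i) = sumN N f + sumN N g.
Proof. induction N; simpl; [lra | rewrite IHN; lra]. Qed.

Lemma sumN_minus N f g : sumN N (fun i => f i - g i) = sumN N f - sumN N g.
Proof. induction N; simpl; [lra | rewrite IHN; lra]. Qed.

Lemma sumN_scal N c f : sumN N (fun i => c * f i) = c * sumN N f.
Proof. induction N; simpl; [lra | rewrite IHN; lra]. Qed.

Lemma sumN_scal_r N c f : sumN N (fun i => f i * c) = sumN N f * c.
Proof. induction N; simpl; [lra | rewrite IHN; lra]. Qed.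

Lemma sumN_zero N f : (forall i, (i < N)%nat -> f i = 0) -> sumN N f = 0.
Proof.
  induction N; intros H; simpl; [lra |].
  rewrite IHN by (intros; apply H; lia). rewrite H by lia. lra.
Qed.

Lemma sumN_swap N M (f : nat -> nat -> R) :
  sumN N (fun i => sumN M (fun j => f i j)) = sumN M (fun j => sumN N (fun i => f i j)).
Proof.
  induction N; simpl.
  - symmetry; apply sumN_zero; auto.
  - rewrite IHN, <- sumN_plus. reflexivity.
Qed.

Lemma sumN_le N f g : (forall i, (i < N)%nat -> f i <= g i) -> sumN N f <= sumN N g.
Proof.
  induction N; intros H; simpl; [lra |].
  assert (f N <= g N) by (apply H; lia).
  assert (sumN N f <= sumN N g) by (apply IHN; intros; apply H; lia). lra.
Qed.

Lemma sumN_nonneg N f : (forall i, (i < N)%nat -> 0 <= f i) -> 0 <= sumN N f.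
Proof. intros H. rewrite <- (sumN_zero N (fun _ => 0)) by auto. apply sumN_le; auto. Qed.

Lemma sumN_ge_term N f k : (forall i, (i < N)%nat -> 0 <= f i) -> (k < N)%nat -> f k <= sumN N f.
Proof.
  induction N; intros H Hk; [lia |]. simpl.
  assert (0 <= f N) by (apply H; lia).
  destruct (Nat.eq_dec k N) as [-> | Hne].
  - assert (0 <= sumN N f) by (apply sumN_nonneg; intros; apply H; lia). lra.
  - assert (f k <= sumN N f) by (apply IHN; [intros; apply H; lia | lia]). lra.
Qed.

Lemma sumN_delta N k f : (k < N)%nat -> sumN N (fun j => if Nat.eq_dec k j then f j else 0) = f k.
Proof.
  induction N; intros H; [lia |]. simpl.
  destruct (Nat.eq_dec k N) as [-> | Hne].
  - rewrite sumN_zero; [lra |]. intros i Hi. destruct (Nat.eq_dec N i); [lia | auto].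
  - rewrite IHN by lia. lra.
Qed.

(* The Stdlib derivation rules restated on lambda terms, so that [apply] finds the
   decomposition by first-order unification. *)
Lemma derivable_pt_lim_add f g x a b : derivable_pt_lim f x a -> derivable_pt_lim g x b ->
  derivable_pt_lim (fun k => f k + g k) x (a + b).
Proof. apply derivable_pt_lim_plus. Qed.

Lemma derivable_pt_lim_sub f g x a b : derivable_pt_lim f x a -> derivable_pt_lim g x b ->
  derivable_pt_lim (fun k => f k - g k) x (a - b).
Proof. apply derivable_pt_lim_minus. Qed.

Lemma derivable_pt_lim_mul f g x a b : derivable_pt_lim f x a -> derivable_pt_lim g x b ->
  derivable_pt_lim (fun k => f k * g k) x (a * g x + f x * b).
Proof. apply derivable_pt_lim_mult. Qed.

Lemma derivable_pt_lim_cmul c f x a : derivable_pt_lim f x a ->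
  derivable_pt_lim (fun k => c * f k) x (c * a).
Proof. apply derivable_pt_lim_scal. Qed.

Lemma derivable_pt_lim_sin_comp f x a : derivable_pt_lim f x a ->
  derivable_pt_lim (fun k => sin (f k)) x (cos (f x) * a).
Proof. intros H. exact (derivable_pt_lim_comp f sin x a _ H (derivable_pt_lim_sin (f x))). Qed.

Lemma derivable_pt_lim_cos_comp f x a : derivable_pt_lim f x a ->
  derivable_pt_lim (fun k => cos (f k)) x (- sin (f x) * a).
Proof. intros H. exact (derivable_pt_lim_comp f cos x a _ H (derivable_pt_lim_cos (f x))). Qed.

Lemma derivable_pt_lim_sumN n (f : nat -> R -> R) d x :
  (forall j, (j < n)%nat -> derivable_pt_lim (f j) x (d j)) ->
  derivable_pt_lim (fun k => sumN n (fun j => f j k)) x (sumN n d).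
Proof.
  induction n; intros H; simpl.
  - apply derivable_pt_lim_const.
  - apply derivable_pt_lim_add; [apply IHn; intros; apply H; lia | apply H; lia].
Qed.

Lemma derivable_pt_lim_local_max f c l eps : 0 < eps ->
  (forall x, Rabs (x - c) < eps -> f x <= f c) -> derivable_pt_lim f c l -> l = 0.
Proof.
  intros He Hmax Hd.
  change l with (derive_pt f c (exist _ l Hd)).
  apply (deriv_maximum f (c - eps) (c + eps)); try lra.
  intros x H1 H2. apply Hmax. apply Rabs_def1; lra.
Qed.

Lemma derivable_pt_lim_quartic_0 e a b c d :
  derivable_pt_lim (fun t => e + a * t + b * t ^ 2 + c * t ^ 3 + d * t ^ 4) 0 a.
Proof.
  assert (Hmon : forall k n, derivable_pt_lim (fun t => k * t ^ n) 0 (k * (INR n * 0 ^ pred n)))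
    by (intros; apply derivable_pt_lim_cmul, derivable_pt_lim_pow).
  assert (Hlin : derivable_pt_lim (fun t => a * t) 0 (a * 1))
    by (apply derivable_pt_lim_cmul, derivable_pt_lim_id).
  set (v := 0 + a * 1 + b * (INR 2 * 0 ^ pred 2) + c * (INR 3 * 0 ^ pred 3)
             + d * (INR 4 * 0 ^ pred 4)).
  assert (H : derivable_pt_lim (fun t => e + a * t + b * t ^ 2 + c * t ^ 3 + d * t ^ 4) 0 v)
    by (repeat apply derivable_pt_lim_add; auto; apply derivable_pt_lim_const).
  replace v with a in H by (unfold v; simpl; ring). exact H.
Qed.

Definition dot N (x y : nat -> R) : R := sumN N (fun i => x i * y i).

Definition bform N (M : nat -> nat -> R) (x y : nat -> R) : R :=
  sumN N (fun i => x i * mat_vec N M y i).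

Definition symmetric N (M : nat -> nat -> R) : Prop :=
  forall i j, (i < N)%nat -> (j < N)%nat -> M i j = M j i.

(* Coercive for [al > 0]; by the first-order condition a maximiser is an eigenvector
   with eigenvalue [2 al |x|^2]. *)
Definition penalized N M al (x : nat -> R) : R :=
  bform N M x x - al * (dot N x x * dot N x x).

Definition unit_vec (k j : nat) : R := if Nat.eq_dec k j then 1 else 0.

Section QuadraticForm.
Variables (N : nat) (M : nat -> nat -> R).

Lemma dot_ge_sqr x i : (i < N)%nat -> x i * x i <= dot N x x.
Proof. intros. apply (sumN_ge_term N (fun i => x i * x i)); auto. intros; nra. Qed.

Lemma dot_pos x i : (i < N)%nat -> x i <> 0 -> 0 < dot N x x.
Proof. intros Hi Hx. pose proof (dot_ge_sqr x i Hi). nra. Qed.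

Lemma dot_eq0 x : dot N x x = 0 -> forall i, (i < N)%nat -> x i = 0.
Proof. intros H i Hi. pose proof (dot_ge_sqr x i Hi). nra. Qed.

Lemma dot_ext x y : (forall i, (i < N)%nat -> x i = y i) -> dot N x x = dot N y y.
Proof. intros H. apply sumN_ext; intros i Hi. rewrite H by auto. reflexivity. Qed.

Lemma bform_ext x y : (forall i, (i < N)%nat -> x i = y i) -> bform N M x x = bform N M y y.
Proof.
  intros H. apply sumN_ext; intros i Hi. rewrite H by auto. f_equal.
  apply sumN_ext; intros j Hj. rewrite H by auto. reflexivity.
Qed.

Lemma bform_sym x y : symmetric N M -> bform N M x y = bform N M y x.
Proof.
  intros HS. unfold bform, mat_vec.
  transitivity (sumN N (fun i => sumN N (fun j => x i * M i j * y j))).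
  { apply sumN_ext; intros i _. rewrite <- sumN_scal. apply sumN_ext; intros; ring. }
  rewrite sumN_swap.
  apply sumN_ext; intros j Hj. rewrite <- sumN_scal. apply sumN_ext; intros i Hi.
  rewrite (HS i j) by auto. ring.
Qed.

Lemma mat_vec_axpy x w t i :
  mat_vec N M (fun j => x j + t * w j) i = mat_vec N M x i + t * mat_vec N M w i.
Proof. unfold mat_vec. rewrite <- sumN_scal, <- sumN_plus. apply sumN_ext; intros; ring. Qed.

Lemma bform_axpy x w t :
  bform N M (fun j => x j + t * w j) (fun j => x j + t * w j) =
  bform N M x x + t * (bform N M w x + bform N M x w) + t ^ 2 * bform N M w w.
Proof.
  unfold bform. rewrite <- sumN_plus, <- !sumN_scal, <- !sumN_plus.
  apply sumN_ext; intros i _. rewrite mat_vec_axpy. ring.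
Qed.

Lemma dot_axpy x w t :
  dot N (fun j => x j + t * w j) (fun j => x j + t * w j) =
  dot N x x + t * (2 * dot N x w) + t ^ 2 * dot N w w.
Proof.
  unfold dot. rewrite <- !sumN_scal, <- !sumN_plus.
  apply sumN_ext; intros i _. ring.
Qed.

Lemma bform_le_dot x :
  bform N M x x <= sumN N (fun i => sumN N (fun j => Rabs (M i j))) * dot N x x.
Proof.
  unfold bform, mat_vec. rewrite <- sumN_scal_r. apply sumN_le; intros i Hi.
  rewrite <- sumN_scal, <- sumN_scal_r. apply sumN_le; intros j Hj.
  pose proof (dot_ge_sqr x i Hi). pose proof (dot_ge_sqr x j Hj).
  assert (Hxy : Rabs (x i) * Rabs (x j) <= dot N x x).
  { rewrite <- Rabs_mult. apply Rabs_le. nra. }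
  pose proof (Rle_abs (x i * (M i j * x j))). rewrite !Rabs_mult in H1.
  pose proof (Rabs_pos (M i j)). pose proof (Rabs_pos (x i)). pose proof (Rabs_pos (x j)).
  nra.
Qed.

Lemma eigenvector_of_bform c lam :
  (forall w, bform N M w c = lam * dot N c w) ->
  forall i, (i < N)%nat -> mat_vec N M c i = lam * c i.
Proof.
  intros Hc i Hi.
  set (w := fun i => mat_vec N M c i - lam * c i).
  assert (Hw : dot N w w = bform N M w c - lam * dot N c w).
  { unfold bform, dot. rewrite <- sumN_scal, <- sumN_minus. apply sumN_ext; intros; unfold w; ring. }
  rewrite Hc, Rminus_diag in Hw.
  pose proof (dot_eq0 w Hw i Hi). unfold w in H. lra.
Qed.

Lemma penalized_argmax_eigenvector al c : symmetric N M ->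
  (forall x, penalized N M al x <= penalized N M al c) ->
  forall i, (i < N)%nat -> mat_vec N M c i = 2 * al * dot N c c * c i.
Proof.
  intros HS Hmax. apply eigenvector_of_bform. intros w.
  set (nc := dot N c c). set (d := dot N c w). set (e := dot N w w).
  set (b := bform N M w c). set (q := bform N M w w).
  set (a := 2 * b - 4 * al * nc * d).
  assert (Hline : forall t, penalized N M al (fun j => c j + t * w j) =
    penalized N M al c + a * t + (q - al * (4 * d * d + 2 * nc * e)) * t ^ 2
    + (- al * 4 * d * e) * t ^ 3 + (- al * e * e) * t ^ 4).
  { intros t. unfold penalized. rewrite bform_axpy, dot_axpy, (bform_sym c w HS).
    fold nc d e b q. unfold a. ring. }
  assert (Ha : a = 0).
  { apply (derivable_pt_lim_local_max (fun t => penalized N M al c + a * t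
      + (q - al * (4 * d * d + 2 * nc * e)) * t ^ 2 + (- al * 4 * d * e) * t ^ 3
      + (- al * e * e) * t ^ 4) 0 a 1 Rlt_0_1).
    - intros t _. rewrite <- Hline. specialize (Hmax (fun j => c j + t * w j)). lra.
    - apply derivable_pt_lim_quartic_0. }
  unfold a in Ha. lra.
Qed.

Lemma bform_unit_vec k : (k < N)%nat -> bform N M (unit_vec k) (unit_vec k) = M k k.
Proof.
  intros Hk. unfold bform, mat_vec, unit_vec.
  transitivity (sumN N (fun i => if Nat.eq_dec k i
                  then sumN N (fun j => if Nat.eq_dec k j then M i j else 0) else 0)).
  { apply sumN_ext; intros i Hi. destruct (Nat.eq_dec k i); [| ring].
    rewrite Rmult_1_l. apply sumN_ext; intros j Hj. destruct (Nat.eq_dec k j); ring. }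
  rewrite sumN_delta by auto. apply sumN_delta; auto.
Qed.

Lemma penalized_vanish al x : (forall i, (i < N)%nat -> x i = 0) -> penalized N M al x = 0.
Proof.
  intros H. unfold penalized, bform, dot.
  rewrite !sumN_zero by (intros i Hi; rewrite H by auto; ring). ring.
Qed.

Lemma penalized_neg al x : 0 < al ->
  sumN N (fun i => sumN N (fun j => Rabs (M i j))) / al < dot N x x ->
  penalized N M al x < 0.
Proof.
  intros Hal Hx. unfold penalized.
  set (S0 := sumN N (fun i => sumN N (fun j => Rabs (M i j)))) in *.
  set (s := dot N x x) in *.
  assert (HS0 : 0 <= S0) by (apply sumN_nonneg; intros; apply sumN_nonneg; intros; apply Rabs_pos).
  assert (Hs : S0 < al * s).
  { apply (Rmult_lt_compat_l al) in Hx; auto. unfold Rdiv in Hx.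
    rewrite <- Rmult_assoc, (Rmult_comm al S0), Rmult_assoc, Rinv_r, Rmult_1_r in Hx; lra. }
  assert (0 < s) by (apply (Rmult_lt_reg_l al); lra).
  pose proof (bform_le_dot x). fold S0 s in H0. nra.
Qed.
End QuadraticForm.

Lemma penalized_row_continuous n M al : BoxMax.row_continuous n (penalized (S n) M al).
Proof.
  unfold penalized, bform, dot, mat_vec.
  apply BoxMax.row_continuous_minus.
  - apply (BoxMax.row_continuous_sumN n (S n) (fun i x => x i * sumN (S n) (fun j => M i j * x j))).
    intros i. apply BoxMax.row_continuous_mult; [apply BoxMax.row_continuous_coord |].
    apply (BoxMax.row_continuous_sumN n (S n) (fun j x => M i j * x j)). intros j.
    apply BoxMax.row_continuous_mult;
      [apply BoxMax.row_continuous_cst | apply BoxMax.row_continuous_coord].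
  - apply BoxMax.row_continuous_mult; [apply BoxMax.row_continuous_cst |].
    apply BoxMax.row_continuous_mult;
      apply (BoxMax.row_continuous_sumN n (S n) (fun i x => x i * x i)); intros i;
      apply BoxMax.row_continuous_mult; apply BoxMax.row_continuous_coord.
Qed.

Lemma penalized_has_max N M al : 0 < al ->
  exists c, forall x, penalized N M al x <= penalized N M al c.
Proof.
  intros Hal. destruct N as [|n].
  { exists (fun _ => 0). intros x. unfold penalized, bform, dot. simpl. lra. }
  set (B := sumN (S n) (fun i => sumN (S n) (fun j => Rabs (M i j))) / al + 1).
  assert (HB : 1 <= B).
  { assert (0 <= sumN (S n) (fun i => sumN (S n) (fun j => Rabs (M i j))) / al); [|unfold B; lra].
    apply Rmult_le_pos; [| left; apply Rinv_0_lt_compat; lra].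
    apply sumN_nonneg; intros; apply sumN_nonneg; intros; apply Rabs_pos. }
  assert (Hloc : forall x y, (forall i, (i <= n)%nat -> x i = y i) ->
                   penalized (S n) M al x = penalized (S n) M al y).
  { intros x y H. unfold penalized. rewrite (bform_ext _ M x y), (dot_ext _ x y); auto;
      intros; apply H; lia. }
  destruct (BoxMax.exists_max_on_box n _ B (penalized_row_continuous n M al) ltac:(lra) Hloc)
    as [c Hmax].
  exists c. intros x.
  destruct (classic (forall i, (i <= n)%nat -> Rabs (x i) <= B)) as [Hin | Hout]; auto.
  apply not_all_ex_not in Hout. destruct Hout as [i Hi].
  apply imply_to_and in Hi. destruct Hi as [Hi Hxi]. apply Rnot_le_lt in Hxi.
  assert (Hc0 : 0 <= penalized (S n) M al c).
  { rewrite <- (penalized_vanish (S n) M al (fun _ => 0)) by auto.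
    apply Hmax. intros; rewrite Rabs_R0; lra. }
  assert (penalized (S n) M al x < 0); [| lra].
  apply penalized_neg; auto.
  pose proof (dot_ge_sqr (S n) x i ltac:(lia)).
  assert (x i * x i = Rabs (x i) * Rabs (x i)) by (rewrite <- Rabs_mult, Rabs_right; nra).
  assert (B <= B * B) by nra.
  assert (B * B < Rabs (x i) * Rabs (x i)) by (apply Rmult_le_0_lt_compat; lra).
  unfold B in *. lra.
Qed.

Lemma symmetric_pos_eigenpair N M y : symmetric N M -> 0 < bform N M y y ->
  exists lam c, 0 < lam /\ eigenpair N M lam c.
Proof.
  intros HS Hy.
  set (Q := bform N M y y) in Hy. set (s := dot N y y).
  assert (Hs : 0 <= s * s) by nra.
  set (al := Q / (2 * (s * s + 1))).
  assert (Hal : 0 < al) by (unfold al; apply Rdiv_lt_0_compat; lra).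
  destruct (penalized_has_max N M al Hal) as [c Hc].
  assert (Hpos : 0 < penalized N M al c).
  { assert (al * (s * s) = Q / 2 - al) by (unfold al; field; lra).
    specialize (Hc y). unfold penalized at 1 in Hc. fold Q s in Hc. lra. }
  assert (Hcnz : exists i, (i < N)%nat /\ c i <> 0).
  { apply NNPP. intros Hno. rewrite penalized_vanish in Hpos; [lra |].
    intros i Hi. apply NNPP. intros Hci. apply Hno. eauto. }
  destruct Hcnz as [i0 [Hi0 Hci0]].
  exists (2 * al * dot N c c), c. split; [| split].
  - pose proof (dot_pos N c i0 Hi0 Hci0). nra.
  - eauto.
  - apply penalized_argmax_eigenvector; auto.
Qed.

Section StableForm.
Variables (N : nat) (M : nat -> nat -> R).
Hypothesis M_sym : symmetric N M.
Hypothesis M_kernel : forall i, (i < N)%nat -> mat_vec N M (fun _ => 1) i = 0.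
Hypothesis M_stable :
  forall lambda v, eigenpair N M lambda v -> ~ constant_vec N v -> lambda < 0.

Lemma mat_vec_constant v : constant_vec N v -> forall i, (i < N)%nat -> mat_vec N M v i = 0.
Proof.
  intros [k Hk] i Hi. rewrite <- (Rmult_0_r k), <- (M_kernel i Hi).
  unfold mat_vec. rewrite <- sumN_scal. apply sumN_ext; intros j Hj. rewrite Hk by auto. ring.
Qed.

Lemma nonzero_of_nonconstant v : ~ constant_vec N v -> exists i, (i < N)%nat /\ v i <> 0.
Proof.
  intros Hv. apply NNPP. intros Hno. apply Hv. exists 0.
  intros i Hi. apply NNPP. intros Hvi. apply Hno. eauto.
Qed.

Lemma stable_bform_nonpos x : bform N M x x <= 0.
Proof.
  apply Rnot_lt_le. intros Hx.
  destruct (symmetric_pos_eigenpair N M x M_sym Hx) as [lam [c [Hlam Hc]]].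
  enough (Hnc : ~ constant_vec N c) by (pose proof (M_stable lam c Hc Hnc); lra).
  intros Hconst. destruct Hc as [[i [Hi Hci]] Hev].
  pose proof (Hev i Hi). rewrite mat_vec_constant in H by auto.
  apply Hci. apply (Rmult_eq_reg_l lam); lra.
Qed.

Lemma stable_bform_neg x : ~ constant_vec N x -> bform N M x x < 0.
Proof.
  intros Hnc. destruct (Rle_lt_or_eq_dec _ _ (stable_bform_nonpos x)) as [| Hx0]; auto.
  (* with [al = 0]: x maximizes the form, so M x = 0 *)
  assert (Hker : forall i, (i < N)%nat -> mat_vec N M x i = 2 * 0 * dot N x x * x i).
  { apply penalized_argmax_eigenvector; auto. intros y. unfold penalized.
    rewrite Hx0. pose proof (stable_bform_nonpos y). lra. }
  enough (0 < 0) by lra.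
  apply (M_stable 0 x); auto. split; [apply nonzero_of_nonconstant; auto |].
  intros i Hi. rewrite Hker by auto. ring.
Qed.
End StableForm.

Lemma cos_sub_comm a b : cos (a - b) = cos (b - a).
Proof. rewrite !cos_minus. ring. Qed.

Lemma sin_sub_anticomm a b : sin (a - b) = - sin (b - a).
Proof. rewrite !sin_minus. ring. Qed.

Definition cos_sum N (A : nat -> nat -> R) (th : nat -> R) : R :=
  sumN N (fun i => sumN N (fun j => A i j * cos (th i - th j))).

Section Jacobian.
Variables (N : nat) (A : nat -> nat -> R).
Hypothesis A_adj : adjacency N A.

Lemma adjacency_nonneg i j : (i < N)%nat -> (j < N)%nat -> 0 <= A i j.
Proof. intros Hi Hj. destruct (proj1 A_adj i j Hi Hj) as [-> | ->]; lra. Qed.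

Lemma jacobian_symmetric K th : symmetric N (jacobian N A K th).
Proof.
  intros i j Hi Hj. unfold jacobian.
  destruct (Nat.eq_dec i j), (Nat.eq_dec j i); subst; try lia; try reflexivity.
  rewrite (proj1 (proj2 A_adj) i j Hi Hj), cos_sub_comm. reflexivity.
Qed.

Lemma jacobian_mat_vec K th v i : (i < N)%nat ->
  mat_vec N (jacobian N A K th) v i =
  K * sumN N (fun j => A i j * cos (th i - th j) * (v j - v i)).
Proof.
  intros Hi. unfold mat_vec.
  transitivity (sumN N (fun j => K * (A i j * cos (th i - th j) * v j) +
     (if Nat.eq_dec i j then - K * sumN N (fun l => A i l * cos (th i - th l)) * v j else 0))).
  { apply sumN_ext; intros j Hj. unfold jacobian. destruct (Nat.eq_dec i j).
    - subst. rewrite (proj2 (proj2 A_adj)) by auto. ring.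
    - ring. }
  rewrite sumN_plus, sumN_scal, sumN_delta by auto.
  rewrite (sumN_ext N (fun j => A i j * cos (th i - th j) * (v j - v i))
    (fun j => A i j * cos (th i - th j) * v j - A i j * cos (th i - th j) * v i))
    by (intros; ring).
  rewrite sumN_minus, sumN_scal_r. ring.
Qed.

Lemma jacobian_kernel K th i : (i < N)%nat ->
  mat_vec N (jacobian N A K th) (fun _ => 1) i = 0.
Proof. intros Hi. rewrite jacobian_mat_vec, sumN_zero by (auto; intros; ring). ring. Qed.

Lemma stable_jacobian_nonpos K th x : stable N A K th ->
  bform N (jacobian N A K th) x x <= 0.
Proof.
  intros Hst. apply stable_bform_nonpos; auto using jacobian_symmetric, jacobian_kernel.
Qed.

Lemma stable_jacobian_neg K th x : stable N A K th -> ~ constant_vec N x ->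
  bform N (jacobian N A K th) x x < 0.
Proof.
  intros Hst. apply stable_bform_neg; auto using jacobian_symmetric, jacobian_kernel.
Qed.

Lemma jacobian_trace K th :
  sumN N (fun k => jacobian N A K th k k) = - K * cos_sum N A th.
Proof.
  unfold cos_sum. rewrite <- sumN_scal. apply sumN_ext; intros k Hk.
  unfold jacobian. destruct (Nat.eq_dec k k); [reflexivity | lia].
Qed.

Lemma stable_cos_sum_pos K th : (2 <= N)%nat -> 0 < K -> stable N A K th ->
  0 < cos_sum N A th.
Proof.
  intros HN HK Hst.
  set (J := jacobian N A K th).
  assert (HJ0 : J 0%nat 0%nat < 0).
  { rewrite <- (bform_unit_vec N J) by lia. apply stable_jacobian_neg; auto.
    intros [c Hc]. pose proof (Hc 0%nat ltac:(lia)). pose proof (Hc 1%nat ltac:(lia)).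
    unfold unit_vec in *. simpl in *. lra. }
  assert (Htr : - J 0%nat 0%nat <= sumN N (fun k => - J k k)).
  { apply (sumN_ge_term N (fun k => - J k k)); [| lia].
    intros k Hk. rewrite <- (bform_unit_vec N J) by auto.
    pose proof (stable_jacobian_nonpos K th (unit_vec k) Hst). unfold J. lra. }
  rewrite (sumN_ext N _ (fun k => -1 * J k k)), sumN_scal in Htr by (intros; ring).
  unfold J in *. rewrite jacobian_trace in Htr. nra.
Qed.

Lemma degree_sum_pos : (2 <= N)%nat -> connected N A -> 0 < sumN N (fun i => degree N A i).
Proof.
  intros HN Hc.
  assert (Hr : reach N A 0 1) by (apply Hc; lia).
  inversion Hr as [| i k j Hk Hak Hkj]; subst.
  assert (A 0%nat k <= degree N A 0).
  { apply (sumN_ge_term N (fun j => A 0%nat j)); auto. intros; apply adjacency_nonneg; lia. }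
  assert (degree N A 0 <= sumN N (fun i => degree N A i)).
  { apply (sumN_ge_term N (fun i => degree N A i)); [| lia].
    intros; apply sumN_nonneg; intros; apply adjacency_nonneg; auto. }
  lra.
Qed.

Lemma stable_r_uni_pos K th : (2 <= N)%nat -> connected N A -> 0 < K -> stable N A K th ->
  0 < r_uni N A th.
Proof.
  intros HN Hc HK Hst. apply Rmult_lt_0_compat.
  - apply Rinv_0_lt_compat, degree_sum_pos; auto.
  - apply (stable_cos_sum_pos K th); auto.
Qed.
End Jacobian.

Lemma in_interval_nbhd lo hi K : in_interval lo hi K ->
  exists eps, 0 < eps /\ forall k, Rabs (k - K) < eps -> in_interval lo hi k.
Proof.
  intros [H1 H2]. destruct hi as [h |].
  - exists (Rmin (K - lo) (h - K)). split; [apply Rmin_pos; lra |].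
    intros k Hk. pose proof (Rmin_l (K - lo) (h - K)). pose proof (Rmin_r (K - lo) (h - K)).
    apply Rabs_def2 in Hk. split; lra.
  - exists (K - lo). split; [lra |]. intros k Hk. apply Rabs_def2 in Hk. split; [lra | exact I].
Qed.

Lemma in_interval_convex lo hi K1 K2 c : in_interval lo hi K1 -> in_interval lo hi K2 ->
  K1 <= c <= K2 -> in_interval lo hi c.
Proof. intros [H1 H2] [H3 H4] Hc. split; [lra |]. destruct hi; auto. lra. Qed.

Definition coupling N (A : nat -> nat -> R) (th : nat -> R) (i : nat) : R :=
  sumN N (fun j => A i j * sin (th j - th i)).

Definition coupling_deriv N (A : nat -> nat -> R) (th dth : nat -> R) (i : nat) : R :=
  sumN N (fun j => A i j * (cos (th j - th i) * (dth j - dth i))).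

Definition cos_sum_deriv N (A : nat -> nat -> R) (th dth : nat -> R) : R :=
  sumN N (fun i => sumN N (fun j => A i j * (- sin (th i - th j) * (dth i - dth j)))).

Section Linearization.
Variables (N : nat) (A : nat -> nat -> R).
Hypothesis A_adj : adjacency N A.

Lemma cos_sum_deriv_coupling th dth :
  cos_sum_deriv N A th dth = 2 * sumN N (fun i => dth i * coupling N A th i).
Proof.
  unfold cos_sum_deriv.
  transitivity (sumN N (fun i => sumN N (fun j => A i j * sin (th j - th i) * dth i)) -
                sumN N (fun i => sumN N (fun j => A i j * sin (th j - th i) * dth j))).
  { rewrite <- sumN_minus. apply sumN_ext; intros i Hi. rewrite <- sumN_minus.
    apply sumN_ext; intros j Hj. rewrite sin_sub_anticomm. ring. }
  rewrite (sumN_swap N N (fun i j => A i j * sin (th j - th i) * dth j)).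
  rewrite <- sumN_minus, <- sumN_scal. apply sumN_ext; intros i Hi.
  unfold coupling. rewrite <- sumN_minus, <- !sumN_scal. apply sumN_ext; intros j Hj.
  rewrite (proj1 (proj2 A_adj) j i Hj Hi), (sin_sub_anticomm (th i)). ring.
Qed.

(* The hypothesis is the K-derivative of the steady-state equations
   omega_i + K coupling_i = 0. *)
Lemma bform_jacobian_coupling K th dth :
  (forall i, (i < N)%nat -> coupling N A th i + K * coupling_deriv N A th dth i = 0) ->
  bform N (jacobian N A K th) dth dth = - sumN N (fun i => dth i * coupling N A th i).
Proof.
  intros Hlin. transitivity (sumN N (fun i => -1 * (dth i * coupling N A th i))).
  2: { rewrite sumN_scal. ring. }
  apply sumN_ext; intros i Hi. rewrite jacobian_mat_vec by auto.
  replace (K * sumN N (fun j => A i j * cos (th i - th j) * (dth j - dth i)))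
    with (K * coupling_deriv N A th dth i).
  { pose proof (Hlin i Hi). nra. }
  unfold coupling_deriv. f_equal. apply sumN_ext; intros j Hj. rewrite cos_sub_comm. ring.
Qed.
End Linearization.

Section SteadyStateFamily.
Variables (N : nat) (A : nat -> nat -> R) (omega : nat -> R).
Variables (lo : R) (hi : option R) (theta : R -> nat -> R) (dtheta : nat -> R -> R).
Hypothesis N_ge2 : (2 <= N)%nat.
Hypothesis A_adj : adjacency N A.
Hypothesis A_conn : connected N A.
Hypothesis theta_deriv : forall i K, (i < N)%nat -> in_interval lo hi K ->
  derivable_pt_lim (fun k => theta k i) K (dtheta i K).
Hypothesis theta_steady : forall K, in_interval lo hi K ->
  stable_steady_state N A omega K (theta K).

Let dth K : nat -> R := fun i => dtheta i K.

Definition r_uni_deriv K : R :=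
  / sumN N (fun i => degree N A i) * cos_sum_deriv N A (theta K) (dth K).

Lemma coupling_derivable K i : in_interval lo hi K -> (i < N)%nat ->
  derivable_pt_lim (fun k => coupling N A (theta k) i) K (coupling_deriv N A (theta K) (dth K) i).
Proof.
  intros HK Hi. apply derivable_pt_lim_sumN. intros j Hj. apply derivable_pt_lim_cmul.
  apply (derivable_pt_lim_sin_comp (fun k => theta k j - theta k i)), derivable_pt_lim_sub;
    apply theta_deriv; auto.
Qed.

Lemma r_uni_derivable K : in_interval lo hi K ->
  derivable_pt_lim (fun k => r_uni N A (theta k)) K (r_uni_deriv K).
Proof.
  intros HK. apply derivable_pt_lim_cmul.
  apply derivable_pt_lim_sumN. intros i Hi. apply derivable_pt_lim_sumN. intros j Hj.
  apply derivable_pt_lim_cmul, (derivable_pt_lim_cos_comp (fun k => theta k i - theta k j)),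
    derivable_pt_lim_sub; apply theta_deriv; auto.
Qed.

Lemma steady_state_linearized K i : in_interval lo hi K -> (i < N)%nat ->
  coupling N A (theta K) i + K * coupling_deriv N A (theta K) (dth K) i = 0.
Proof.
  intros HK Hi.
  destruct (in_interval_nbhd lo hi K HK) as [eps [He Hnbhd]].
  assert (Hsteady : forall k, in_interval lo hi k -> omega i + k * coupling N A (theta k) i = 0)
    by (intros k Hk; apply (proj1 (theta_steady k Hk)); auto).
  assert (Hd : derivable_pt_lim (fun k => omega i + k * coupling N A (theta k) i) K
     (0 + (1 * coupling N A (theta K) i + K * coupling_deriv N A (theta K) (dth K) i))).
  { apply derivable_pt_lim_add; [apply derivable_pt_lim_const |].
    apply derivable_pt_lim_mul; [apply derivable_pt_lim_id | apply coupling_derivable; auto]. }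
  enough (0 + (1 * coupling N A (theta K) i + K * coupling_deriv N A (theta K) (dth K) i) = 0)
    by lra.
  refine (derivable_pt_lim_local_max _ K _ eps He _ Hd).
  intros k Hk. rewrite !Hsteady by auto. lra.
Qed.

Lemma r_uni_deriv_jacobian K : in_interval lo hi K ->
  r_uni_deriv K = / sumN N (fun i => degree N A i) *
                  (-2 * bform N (jacobian N A K (theta K)) (dth K) (dth K)).
Proof.
  intros HK. unfold r_uni_deriv. f_equal.
  rewrite cos_sum_deriv_coupling, (bform_jacobian_coupling N A A_adj) by
    (auto; intros; apply steady_state_linearized; auto).
  ring.
Qed.

Lemma r_uni_deriv_nonneg K : in_interval lo hi K -> 0 <= r_uni_deriv K.
Proof.
  intros HK. rewrite r_uni_deriv_jacobian by auto.
  pose proof (degree_sum_pos N A A_adj N_ge2 A_conn).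
  pose proof (stable_jacobian_nonpos N A A_adj K (theta K) (dth K) (proj2 (theta_steady K HK))).
  apply Rmult_le_pos; [left; apply Rinv_0_lt_compat |]; lra.
Qed.

Lemma r_uni_deriv_pos K : in_interval lo hi K -> (exists i, (i < N)%nat /\ omega i <> 0) ->
  0 < r_uni_deriv K.
Proof.
  intros HK [i [Hi Homega]]. rewrite r_uni_deriv_jacobian by auto.
  destruct (theta_steady K HK) as [Hsteady Hstable].
  assert (Hnc : ~ constant_vec N (dth K)).
  { intros [c Hc]. apply Homega.
    assert (Hd0 : coupling_deriv N A (theta K) (dth K) i = 0).
    { apply sumN_zero. intros j Hj. rewrite (Hc j Hj), (Hc i Hi). ring. }
    pose proof (steady_state_linearized K i HK Hi) as Hlin.
    rewrite Hd0, Rmult_0_r, Rplus_0_r in Hlin.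
    pose proof (Hsteady i Hi) as Hw. unfold coupling in Hlin. rewrite Hlin in Hw. lra. }
  pose proof (degree_sum_pos N A A_adj N_ge2 A_conn).
  pose proof (stable_jacobian_neg N A A_adj K (theta K) (dth K) Hstable Hnc).
  apply Rmult_lt_0_compat; [apply Rinv_0_lt_compat |]; lra.
Qed.

Lemma r_uni_mean_value K1 K2 : in_interval lo hi K1 -> in_interval lo hi K2 -> K1 < K2 ->
  exists c, in_interval lo hi c /\
    r_uni N A (theta K2) - r_uni N A (theta K1) = r_uni_deriv c * (K2 - K1).
Proof.
  intros H1 H2 H12.
  destruct (MVT_cor2 (fun k => r_uni N A (theta k)) r_uni_deriv K1 K2 H12) as [c [Hc Hcin]].
  - intros c Hc. apply r_uni_derivable. apply (in_interval_convex lo hi K1 K2); auto.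
  - exists c. split; auto. apply (in_interval_convex lo hi K1 K2); auto; lra.
Qed.

Lemma r_uni_nondecreasing K1 K2 : in_interval lo hi K1 -> in_interval lo hi K2 -> K1 <= K2 ->
  r_uni N A (theta K1) <= r_uni N A (theta K2).
Proof.
  intros H1 H2 H12. destruct (Req_dec K1 K2) as [-> | Hne]; [lra |].
  destruct (r_uni_mean_value K1 K2 H1 H2) as [c [Hc Hmv]]; [lra |].
  pose proof (r_uni_deriv_nonneg c Hc). nra.
Qed.

Lemma r_uni_increasing K1 K2 : (exists i, (i < N)%nat /\ omega i <> 0) ->
  in_interval lo hi K1 -> in_interval lo hi K2 -> K1 < K2 ->
  r_uni N A (theta K1) < r_uni N A (theta K2).
Proof.
  intros Homega H1 H2 H12.
  destruct (r_uni_mean_value K1 K2 H1 H2 H12) as [c [Hc Hmv]].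
  pose proof (r_uni_deriv_pos c Hc Homega). nra.
Qed.
End SteadyStateFamily.

Theorem theorem2 :
  forall (N : nat) (A : nat -> nat -> R) (omega : nat -> R),
    (2 <= N)%nat ->
    adjacency N A ->
    connected N A ->
    sumN N omega = 0 ->
    (* (i) *)
    (forall (K : R) (theta : nat -> R),
        0 < K -> stable_steady_state N A omega K theta ->
        r_uni N A theta > 0)
    /\
    (* (ii) *)
    (forall (lo : R) (hi : option R) (theta : R -> nat -> R),
        0 <= lo ->
        (* continuously differentiable family *)
        (exists dtheta : nat -> R -> R,
            forall i K, (i < N)%nat -> in_interval lo hi K ->
              derivable_pt_lim (fun k => theta k i) K (dtheta i K) /\
              continuity_pt (dtheta i) K) ->
        (forall K, in_interval lo hi K ->
            stable_steady_state N A omega K (theta K)) ->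
        (forall K1 K2, in_interval lo hi K1 -> in_interval lo hi K2 ->
            K1 <= K2 -> r_uni N A (theta K1) <= r_uni N A (theta K2))
        /\
        ((exists i, (i < N)%nat /\ omega i <> 0) ->
          (forall K1 K2, in_interval lo hi K1 -> in_interval lo hi K2 ->
              K1 < K2 -> r_uni N A (theta K1) < r_uni N A (theta K2)) /\
          (forall K, in_interval lo hi K ->
              exists d, derivable_pt_lim (fun k => r_uni N A (theta k)) K d
                        /\ d > 0))).
Proof.
  intros N A omega HN HA Hc _. split.
  - intros K th HK [_ Hst]. apply (stable_r_uni_pos N A HA K th); auto.
  - intros lo hi theta _ [dtheta Hd] Hss.
    assert (Hder : forall i K, (i < N)%nat -> in_interval lo hi K ->
      derivable_pt_lim (fun k => theta k i) K (dtheta i K)) by (intros; apply Hd; auto).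
    split; [| split].
    + intros; eapply r_uni_nondecreasing; eauto.
    + intros; eapply r_uni_increasing; eauto.
    + intros K HK. eexists. split.
      * apply (r_uni_derivable N A lo hi theta dtheta); auto.
      * apply (r_uni_deriv_pos N A omega lo hi theta dtheta); auto.
Qed.
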